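(* Let $\mathcal{G}$ be a hypergraph with rank $r(\mathcal{G})=r$. Then the strong chromatic number satisfies $\gamma(\mathcal{G})\le 1+(r-1)\lambda_{\max}(A_{\mathcal{G}})$, where $\lambda_{\max}(A_{\mathcal{G}})$ is the largest eigenvalue of $A_{\mathcal{G}}$.
   Context: A hypergraph $\mathcal{G}=(V,E)$ has a finite vertex set $V$ and a set $E$ of subsets of $V$ (edges), each of cardinality at least $2$. The rank $r(\mathcal{G})$ is the maximum cardinality of an edge. Two distinct vertices are adjacent if some edge contains both. The adjacency matrix $A_{\mathcal{G}}$ has $(A_{\mathcal{G}})_{ij}=\sum_{e\in E,\, i,j\in e}\frac{1}{|e|-1}$ for $i\ne j$ and zero diagonal. A strong vertex coloring assigns colors to vertices so that any two adjacent vertices get different colors; the strong chromatic number $\gamma(\mathcal{G})$ is the minimum number of colors in a strong vertex coloring. *)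

From HB Require Import structures.
From mathcomp Require Import all_boot all_order all_algebra.
Set Implicit Arguments. Unset Strict Implicit. Unset Printing Implicit Defensive.
Import Order.TTheory GRing.Theory Num.Theory.
Local Open Scope ring_scope.

Definition is_hypergraph (V : finType) (E : {set {set V}}) : Prop :=
  forall e, e \in E -> (2 <= #|e|)%N.

Definition hrank (V : finType) (E : {set {set V}}) : nat :=
  (\max_(e in E) #|e|)%N.

Definition hadj (V : finType) (E : {set {set V}}) (x y : V) : bool :=
  (x != y) && [exists e in E, (x \in e) && (y \in e)].

Definition strong_coloring (V : finType) (E : {set {set V}}) (k : nat)
  (c : {ffun V -> 'I_k}) : bool :=
  [forall x, forall y, hadj E x y ==> (c x != c y)].

Definition colorable (V : finType) (E : {set {set V}}) (k : nat) : bool :=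
  [exists c : {ffun V -> 'I_k}, strong_coloring E c].

Lemma colorable_card (V : finType) (E : {set {set V}}) :
  exists k, colorable E k.
Proof.
exists #|V|; apply/existsP; exists [ffun x => enum_rank x].
apply/forallP => x; apply/forallP => y; apply/implyP => /andP[nxy _].
by rewrite !ffunE; apply: contra nxy => /eqP /enum_rank_inj ->.
Qed.

Definition strong_chromatic (V : finType) (E : {set {set V}}) : nat :=
  ex_minn (colorable_card E).

Definition hadjmx (R : fieldType) (V : finType) (E : {set {set V}})
  : 'M[R]_#|V| :=
  \matrix_(i, j) (if i == j then 0 else
     \sum_(e in E | (enum_val i \in e) && (enum_val j \in e))
        ((#|e| - 1)%:R)^-1).

Definition is_lambda_max (R : realFieldType) (n : nat) (A : 'M[R]_n) (l : R)
  : Prop :=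
  eigenvalue A l /\ forall m, eigenvalue A m -> m <= l.

(* Let D be the degeneracy of the adjacency graph of the hypergraph, i.e. the
   least D such that every nonempty vertex set H has a vertex with at most D
   neighbours in H.  Colouring greedily, each time removing such a vertex,
   gives a strong colouring with D + 1 colours.  By minimality of D there is
   a nonempty H in which every vertex has at least D neighbours.  Adjacent
   vertices share an edge of size at most r, so the corresponding entry of A
   is at least 1/(r-1); evaluating the Rayleigh quotient of the symmetric
   matrix A at the indicator vector of H then gives D/(r-1) <= lambda_max. *)

From HB Require Import structures.
From mathcomp Require Import all_boot all_order all_algebra.
From mathcomp.real_closed Require Import complex.
Set Implicit Arguments. Unset Strict Implicit. Unset Printing Implicit Defensive.
Import Order.TTheory GRing.Theory Num.Theory.
Local Open Scope ring_scope.

Section Rayleigh.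
Local Open Scope sesquilinear_scope.

Lemma spectral_diag_eigenvalue {C : numClosedFieldType} n (A : 'M[C]_n) i :
  A \is normalmx -> eigenvalue A (spectral_diag A 0 i).
Proof.
move=> /orthomx_spectralP AE; set P := spectralmx A in AE.
have P_unit : P \in unitmx := spectral_unit A.
apply/eigenvalueP; exists (row i P).
  by rewrite -row_mul {1}AE !mulmxA mulmxV // mul1mx row_mul row_diag_mx
    -scalemxAl -rowE.
apply: contra_neq (oner_neq0 C) => rowP0.
have := congr1 (fun v => (v *m invmx P) 0 i) rowP0.
by rewrite /= -row_mul mulmxV // mul0mx !mxE eqxx.
Qed.

Lemma normalmx_quad_le {C : numClosedFieldType} n (A : 'M[C]_n) (l : C) :
  A \is normalmx -> (forall i, spectral_diag A 0 i <= l) ->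
  forall x : 'rV_n, (x *m A *m x^t*) 0 0 <= l * (x *m x^t*) 0 0.
Proof.
move=> /orthomx_spectralP AE d_le x.
set P := spectralmx A in AE; set d := spectral_diag A in AE d_le.
have P_unitary : P \is unitarymx := spectral_unitarymx A.
pose y := x *m P^t*.
have yP : y^t* = P *m x^t* by rewrite trmx_mul map_mxM trmxCK.
have quadE : x *m A *m x^t* = y *m diag_mx d *m y^t*.
  by rewrite yP AE invmx_unitary // !mulmxA.
have normE : x *m x^t* = y *m y^t*.
  by rewrite yP !mulmxA mulmxKtV // (unitarymxP P_unitary).
rewrite quadE normE mul_mx_diag; clearbody y.
rewrite !mxE mulr_sumr; apply: ler_sum => j _.
rewrite !mxE mulrAC [l * _]mulrC.
by apply: ler_wpM2l; [exact: mul_conjC_ge0 | exact: d_le].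
Qed.

Lemma symmetric_quad_le (R : rcfType) n (A : 'M[R]_n) (l : R) :
  A^T = A -> (forall a, eigenvalue A a -> a <= l) ->
  forall x : 'rV_n, (x *m A *m x^T) 0 0 <= l * (x *m x^T) 0 0.
Proof.
move=> A_sym l_max x.
(* The spectral theorem is available for normal matrices over R[i]. *)
pose f : {rmorphism R -> R[i]} := real_complex R.
have real_tr m p (M : 'M[R]_(m, p)) : (map_mx f M)^t* = map_mx f M^T.
  apply/matrixP => i j; rewrite !mxE.
  by apply/CrealP/complex_realP; exists (M j i).
have A_herm : map_mx f A \is hermsymmx.
  apply: realsym_hermsym; last first.
    by apply/mxOverP => i j; rewrite mxE; apply/complex_realP; exists (A i j).
  by apply/is_hermitianmxP; rewrite expr0 scale1r map_mx_id // map_trmx A_sym.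
have A_normal := hermitian_normalmx A_herm.
have d_le i : spectral_diag (map_mx f A) 0 i <= f l.
  have /complex_realP [a d_a] :=
    mxOverP (hermitian_spectral_diag_real A_herm) 0 i.
  rewrite d_a lecR; apply: l_max; rewrite -(eigenvalue_map f).
  by rewrite -[f a]/(real_complex R a) -d_a spectral_diag_eigenvalue.
suff : (map_mx f x *m map_mx f A *m (map_mx f x)^t*) 0 0
         <= f l * (map_mx f x *m (map_mx f x)^t*) 0 0.
  by rewrite real_tr -!map_mxM !mxE -rmorphM lecR.
exact: normalmx_quad_le.
Qed.

End Rayleigh.

Section Degeneracy.
Variables (T : finType) (adj : rel T).

Definition degree_in (H : {set T}) (v : T) : nat := #|[set u in H | adj v u]|.

Definition degenerate (D : nat) : bool :=
  [forall H : {set T}, (H != set0) ==> [exists v in H, degree_in H v <= D]%N].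

Lemma degenerateP D :
  reflect (forall H, H != set0 -> exists2 v, v \in H & (degree_in H v <= D)%N)
          (degenerate D).
Proof.
apply: (iffP forallP) => [deg H H0 | deg H]; last first.
  by apply/implyP => /deg [v vH le_vD]; apply/existsP; exists v; rewrite vH.
by have /implyP/(_ H0)/existsP [v /andP [vH le_vD]] := deg H; exists v.
Qed.

Lemma degenerate_card : degenerate #|T|.
Proof.
apply/degenerateP => H /set0Pn [v vH]; exists v => //.
exact: max_card.
Qed.

Lemma degeneracy_core (x0 : T) : exists D, degenerate D /\
  exists2 H : {set T}, H != set0 & {in H, forall v, D <= degree_in H v}%N.
Proof.
have [D D_deg D_min] := ex_minnP (ex_intro degenerate _ degenerate_card).
exists D; split => //; case: D D_deg D_min => [|D] _ D_min.
  by exists setT => //; apply/set0Pn; exists x0; rewrite inE.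
have : ~~ degenerate D by apply/negP => /D_min; rewrite ltnn.
case/forallPn => H; rewrite negb_imply => /andP [H0 /existsPn no_low].
by exists H => // v vH; have := no_low v; rewrite vH -ltnNge.
Qed.

Hypotheses (adj_sym : symmetric adj) (adj_irr : irreflexive adj).

Lemma degenerate_coloring D : degenerate D ->
  exists c : T -> 'I_D.+1, forall x y, adj x y -> c x != c y.
Proof.
move=> /degenerateP D_deg.
suff /(_ setT) [c c_ok] : forall S : {set T}, exists c : T -> 'I_D.+1,
    {in S &, forall x y, adj x y -> c x != c y}.
  by exists c => x y; apply: c_ok; rewrite inE.
move=> S; have [m] := ubnP #|S|; elim: m S => // m IH S S_lt.
have [->|S0] := eqVneq S set0.
  by exists (fun _ => ord0) => x; rewrite inE.
have [v vS v_deg] := D_deg S S0.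
have [c c_ok] : exists c : T -> 'I_D.+1,
    {in S :\ v &, forall x y, adj x y -> c x != c y}.
  by apply: IH; rewrite (cardsD1 v S) vS add1n ltnS in S_lt.
pose used := c @: [set u in S | adj v u].
have [k0 k0_free] : exists k0, k0 \notin used.
  apply/existsP; rewrite -negb_forall.
  apply: contraTN v_deg => /forallP all_used.
  rewrite -ltnNge; apply: leq_trans (leq_imset_card c _).
  rewrite -{1}[D.+1]card_ord; apply/subset_leq_card/subsetP => k _.
  exact: all_used.
have used_nb u : u \in S -> adj v u -> c u \in used.
  by move=> uS vu; apply: imset_f; rewrite inE uS.
exists (fun x => if x == v then k0 else c x).
move=> x y; case: (eqVneq x v) => [->|xv];
  case: (eqVneq y v) => [->|yv] xS yS xy.
- by rewrite adj_irr in xy.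
- by apply: contraNneq k0_free => ->; apply: used_nb.
- by apply: contraNneq k0_free => <-; apply: used_nb; rewrite // adj_sym.
- by apply: c_ok; rewrite // !inE ?xv ?yv.
Qed.

End Degeneracy.

Definition indicator_row (R : pzSemiRingType) n (H : {set 'I_n}) : 'rV[R]_n :=
  \row_i (i \in H)%:R.

Section IndicatorRow.
Variables (R : pzSemiRingType) (n : nat) (H : {set 'I_n}).
Local Notation x := (indicator_row R H).

Lemma indicator_quadE (M : 'M[R]_n) :
  (x *m M *m x^T) 0 0 = \sum_(i in H) \sum_(j in H) M i j.
Proof.
rewrite mxE exchange_big /= [RHS]big_mkcond; apply: eq_bigr => j _.
rewrite !mxE mulr_suml; case: (j \in H) => /=; last first.
  by rewrite big1 // => i _; rewrite mulr0.
rewrite [RHS]big_mkcond; apply: eq_bigr => i _.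
by rewrite !mxE mulr1; case: (i \in H); rewrite ?mul1r ?mul0r.
Qed.

Lemma indicator_normE : (x *m x^T) 0 0 = #|H|%:R.
Proof.
rewrite mxE -sum1_card natr_sum [RHS]big_mkcond; apply: eq_bigr => i _.
by rewrite !mxE; case: (i \in H); rewrite ?mul1r ?mul0r.
Qed.

End IndicatorRow.

Lemma min_degree_le_eigenvalue (R : rcfType) n (A : 'M[R]_n) (adj : rel 'I_n)
    (c l : R) (D : nat) (H : {set 'I_n}) :
  A^T = A -> (forall i j, 0 <= A i j) -> 0 <= c ->
  (forall i j, adj i j -> c <= A i j) -> (forall a, eigenvalue A a -> a <= l) ->
  H != set0 -> {in H, forall v, D <= degree_in adj H v}%N ->
  c * D%:R <= l.
Proof.
move=> A_sym A_ge0 c_ge0 A_adj l_max H0 H_deg.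
have H_pos : 0 < #|H|%:R :> R by rewrite ltr0n card_gt0.
have row_ge i : i \in H -> c * D%:R <= \sum_(j in H) A i j.
  move=> iH; rewrite (bigID (adj i)) /= -[leLHS]addr0.
  apply: lerD; last by apply: sumr_ge0.
  apply: (@le_trans _ _ (\sum_(j in [set u in H | adj i u]) c)).
    by rewrite sumr_const -[c *+ _]mulr_natr ler_wpM2l // ler_nat H_deg.
  rewrite [leRHS](eq_bigl (mem [set u in H | adj i u])) => [|j]; last first.
    by rewrite !inE.
  by apply: ler_sum => j; rewrite inE => /andP [_ /A_adj].
have := symmetric_quad_le A_sym l_max (indicator_row R H).
rewrite indicator_quadE indicator_normE => le_l.
rewrite -(ler_pM2r H_pos); apply: le_trans le_l.
rewrite -sum1_card natr_sum mulr_sumr.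
by apply: ler_sum => i iH; rewrite mulr1; apply: row_ge.
Qed.

Lemma eigenvalue_mx0 (F : fieldType) n (a : F) :
  eigenvalue (0 : 'M_n) a -> a = 0.
Proof.
case/eigenvalueP => v; rewrite mulmx0 => /esym/eqP; rewrite scaler_eq0.
by case/orP => [/eqP // | /eqP -> /eqP].
Qed.

Section Hypergraph.
Variables (V : finType) (E : {set {set V}}).

Lemma hadj_sym : symmetric (hadj E).
Proof.
move=> x y; rewrite /hadj eq_sym; congr (_ && _).
by apply: eq_existsb => e; rewrite [(x \in e) && _]andbC.
Qed.

Lemma hadj_irr : irreflexive (hadj E).
Proof. by move=> x; rewrite /hadj eqxx. Qed.

Lemma strong_chromatic_le k : colorable E k -> (strong_chromatic E <= k)%N.
Proof. by rewrite /strong_chromatic; case: ex_minnP => m _; apply. Qed.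

Lemma coloring_colorable k (c : V -> 'I_k) :
  (forall x y, hadj E x y -> c x != c y) -> colorable E k.
Proof.
move=> c_ok; apply/existsP; exists [ffun x => c x].
apply/forallP => x; apply/forallP => y; apply/implyP.
by rewrite !ffunE; apply: c_ok.
Qed.

Lemma colorable_set0 : E = set0 -> colorable E 1.
Proof.
move=> E0; apply: (@coloring_colorable _ (fun=> ord0)) => x y.
by case/andP => _ /existsP [e]; rewrite E0 inE.
Qed.

Definition enum_hadj : rel 'I_#|V| :=
  fun i j => hadj E (enum_val i) (enum_val j).

Lemma colorable_degenerate D : degenerate enum_hadj D -> colorable E D.+1.
Proof.
have sym : symmetric enum_hadj := fun i j => hadj_sym _ _.
have irr : irreflexive enum_hadj := fun i => hadj_irr _.
case/(degenerate_coloring sym irr) => c c_ok.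
apply: (@coloring_colorable _ (c \o enum_rank)) => x y xy.
by apply: c_ok; rewrite /enum_hadj !enum_rankK.
Qed.

Lemma hadjmx_tr (R : fieldType) : (hadjmx R E)^T = hadjmx R E.
Proof.
apply/matrixP => i j; rewrite !mxE eq_sym; congr (if _ then _ else _).
by apply: eq_bigl => e; rewrite [(enum_val j \in e) && _]andbC.
Qed.

Lemma hadjmx_ge0 (R : numFieldType) i j : 0 <= hadjmx R E i j.
Proof.
rewrite mxE; case: (_ == _) => //; apply: sumr_ge0 => e _.
by rewrite invr_ge0 ler0n.
Qed.

Lemma hadjmx_ge_rank (R : numFieldType) : is_hypergraph E ->
  forall i j, enum_hadj i j -> ((hrank E - 1)%:R)^-1 <= hadjmx R E i j.
Proof.
move=> hE i j /andP [ij /existsP [e /andP [eE ije]]].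
have e_ge2 := hE e eE; have e_le : (#|e| <= hrank E)%N := leq_bigmax_cond _ eE.
rewrite (inj_eq enum_val_inj) in ij; rewrite mxE (negPf ij) (bigD1 e) ?eE //=.
apply: (@le_trans _ _ (#|e| - 1)%:R^-1).
  rewrite lef_pV2 ?posrE ?ltr0n ?subn_gt0 ?(leq_trans e_ge2) //.
  by rewrite ler_nat leq_sub2r.
by rewrite lerDl sumr_ge0 // => e' _; rewrite invr_ge0 ler0n.
Qed.

Lemma hadjmx_set0 (R : fieldType) : E = set0 -> hadjmx R E = 0.
Proof.
move=> ->; apply/matrixP => i j.
by rewrite !mxE big_pred0 ?if_same // => e; rewrite inE.
Qed.

End Hypergraph.

Theorem theorem3 (R : rcfType) (V : finType) (E : {set {set V}})
  (hE : is_hypergraph E) (lmax : R)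
  (hl : is_lambda_max (hadjmx R E) lmax) :
  (strong_chromatic E)%:R <= 1 + ((hrank E)%:R - 1) * lmax.
Proof.
case: hl => l_ev l_max.
have [E0 | [e eE]] := set_0Vmem E.
  have -> : lmax = 0 by move: l_ev; rewrite hadjmx_set0 // => /eigenvalue_mx0.
  by rewrite mulr0 addr0 lern1 strong_chromatic_le ?colorable_set0.
have r_ge2 : (2 <= hrank E)%N := leq_trans (hE e eE) (leq_bigmax_cond _ eE).
have [v _] : exists v, v \in e by apply/set0Pn; rewrite -card_gt0 ltnW ?hE.
have [D [D_deg [H H0 H_deg]]] := degeneracy_core (enum_hadj E) (enum_rank v).
have chi_le : (strong_chromatic E <= D.+1)%N.
  exact/strong_chromatic_le/colorable_degenerate.
have c_ge0 : 0 <= ((hrank E - 1)%:R)^-1 :> R by rewrite invr_ge0 ler0n.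
have := min_degree_le_eigenvalue (hadjmx_tr E R) (hadjmx_ge0 E R) c_ge0
  (hadjmx_ge_rank R hE) l_max H0 H_deg.
have r1_pos : 0 < (hrank E - 1)%:R :> R by rewrite ltr0n subn_gt0.
rewrite mulrC ler_pdivrMr // natrB ?(ltnW r_ge2) // => D_le.
apply: le_trans (_ : D.+1%:R <= _); first by rewrite ler_nat.
by rewrite -add1n natrD lerD2l mulrC.
Qed.
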